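(* Let $A\in\mathbb{C}^{n\times n}$ be Hermitian and let $Q\in\mathbb{C}^{n\times k}$, $2\le k\le n$, have orthonormal columns. Let $Q^*AQ=\Omega\widehat\Lambda\Omega^*$ with $\Omega$ unitary and $\widehat\Lambda=\mathrm{diag}(\widehat\lambda_1,\ldots,\widehat\lambda_k)$, and let $\widehat X=[\widehat x_1,\ldots,\widehat x_k]=Q\Omega$. Let $Q_\perp$ be such that $[Q\ Q_\perp]$ is unitary, and set $R=Q_\perp^*AQ\Omega=[r_1,\ldots,r_k]$, $A_3=Q_\perp^*AQ_\perp$, $\widehat\Lambda_2=\mathrm{diag}(\widehat\lambda_2,\ldots,\widehat\lambda_k)$, $R_2=[r_2,\ldots,r_k]$, and $\widehat x=\widehat x_1$. Let $(\lambda,x)$ be an eigenpair of $A$ with $\|x\|=1$, and define $\mathrm{Gap}=\min|\lambda-\lambda(A_3)|$, $\mathrm{gap}=\min|\lambda-\lambda(\widehat\Lambda_2)|$. Then: (i) if $\mathrm{Gap}>\|R_2\|^2/\mathrm{gap}$, then $$\sin\angle(x,\widehat x)\le\frac{\|r_1\|}{\mathrm{Gap}-\frac{\|R_2\|^2}{\mathrm{gap}}}\sqrt{1+\frac{\|R_2\|^2}{\mathrm{gap}^2}};$$ (ii) if $\mathrm{Gap}>\sum_{i=2}^k\frac{\|r_i\|^2}{|\lambda-\widehat\lambda_i|}$, then $$\sin\angle(x,\widehat x)\le\frac{\|r_1\|}{\mathrm{Gap}-\sum_{i=2}^k\frac{\|r_i\|^2}{|\lambda-\widehat\lambda_i|}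}\sqrt{1+\Big(\sum_{i=2}^k\frac{\|r_i\|}{|\lambda-\widehat\lambda_i|}\Big)^2}.$$
   Context: $\|\cdot\|$ is the Euclidean norm for vectors and the spectral norm for matrices. $\lambda(M)$ is the spectrum of a Hermitian matrix $M$ and $\min|\lambda-\lambda(M)|$ its distance to $\lambda$. For unit vectors, $\angle(x,\widehat x)=\arccos|\widehat x^*x|$. Note $\|r_i\|=\|A\widehat x_i-\widehat\lambda_i\widehat x_i\|$. A bound with a vanishing denominator is interpreted as $+\infty$. *)

From HB Require Import structures.
From mathcomp Require Import all_boot all_order all_algebra.
From mathcomp Require Import all_classical all_reals.
From mathcomp Require Import ereal topology normedtype trigo.
From mathcomp Require Import complex.
Set Implicit Arguments. Unset Strict Implicit. Unset Printing Implicit Defensive.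
Import Order.TTheory GRing.Theory Num.Theory.
Local Open Scope ring_scope.
Local Open Scope classical_set_scope.

Section Defs.
Variable R : realType.
Local Notation C := (R[i]).

Definition cmod (z : C) : R := Num.sqrt (complex.Re z ^+ 2 + complex.Im z ^+ 2).

Definition adj (m p : nat) (M : 'M[C]_(m, p)) : 'M[C]_(p, m) :=
  (map_mx (@conjc R) M)^T.

Definition vnorm (m : nat) (v : 'cV[C]_m) : R :=
  Num.sqrt (\sum_i cmod (v i 0) ^+ 2).

Definition specnorm (m p : nat) (M : 'M[C]_(m, p)) : R :=
  sup [set vnorm (M *m v) | v in [set v : 'cV[C]_p | vnorm v = 1]].

(* angle between unit vectors: arccos |xh^* x| *)
Definition vangle (m : nat) (x xh : 'cV[C]_m) : R :=
  acos (cmod ((adj xh *m x) 0 0)).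

(* min |lam - lambda(M)| over the spectrum; +oo if the spectrum is empty *)
Definition specdist (m : nat) (M : 'M[C]_m) (lam : C) : \bar R :=
  ereal_inf [set ((cmod (lam - mu))%:E)%E | mu in [set mu | eigenvalue M mu]].

Definition edivr (a d : R) : \bar R :=
  if d == 0 then +oo%E else (a / d)%:E.

End Defs.

From HB Require Import structures.
From mathcomp Require Import all_boot all_order all_algebra.
From mathcomp Require Import all_classical all_reals.
From mathcomp Require Import ereal topology normedtype trigo.
From mathcomp Require Import complex.
From mathcomp Require Import spectral.
From mathcomp Require Import ring lra.

(* Write x = Xh y + Qp z in the orthonormal basis [Xh Qp], so that
   |y|^2 + |z|^2 = 1 and sin^2 angle(x, xh) = |y2|^2 + |z|^2, where y2 drops the
   first entry of y.  Projecting A x = lam x onto the two blocks gives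
   (lam - A3) z = R y and (lam - lamh_i) y_i = r_i^* z.  The first, through the
   spectral theorem for A3, yields Gap |z| <= |r_1| + |R2 y2|.  The second bounds
   y2 by a multiple of |z|: gap |y2| <= |R2^* z| <= |R2| |z| for (i), and
   |y_i| <= |r_i| |z| / |lam - lamh_i| entrywise for (ii).  Substituting and
   solving for |z| gives both bounds. *)

Set Implicit Arguments. Unset Strict Implicit. Unset Printing Implicit Defensive.
Import Order.TTheory GRing.Theory Num.Theory.
Local Open Scope ring_scope.

Lemma ler_of_sqr (R : realDomainType) (x y : R) : 0 <= y -> x ^+ 2 <= y ^+ 2 -> x <= y.
Proof. by move=> y0 h; nra. Qed.

Lemma sum_mul_sqr_le (R : realFieldType) (I : finType) (a b : I -> R) :
  (\sum_i a i * b i) ^+ 2 <= (\sum_i a i ^+ 2) * (\sum_i b i ^+ 2).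
Proof.
set A := \sum_i a i ^+ 2; set B := \sum_i b i ^+ 2; set P := \sum_i a i * b i.
have [A0|A_neq0] := eqVneq A 0.
  have a0 i : a i = 0.
    apply/eqP; rewrite -sqrf_eq0; apply/eqP; move/eqP: A0; rewrite psumr_eq0.
      by move=> /allP/(_ i (mem_index_enum i))/implyP/(_ isT)/eqP.
    by move=> j _; apply: sqr_ge0.
  by rewrite /P big1 ?expr0n ?A0 ?mul0r // => i _; rewrite a0 mul0r.
have A_gt0 : 0 < A by rewrite lt_neqAle eq_sym A_neq0 sumr_ge0 // => i _; apply: sqr_ge0.
have : 0 <= \sum_i (a i * (- P / A) + b i) ^+ 2 by apply: sumr_ge0 => i _; apply: sqr_ge0.
(* expanding the square at the minimiser t = - P / A leaves B - P^2 / A *)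
have -> : \sum_i (a i * (- P / A) + b i) ^+ 2 = B - P ^+ 2 / A.
  rewrite (eq_bigr (fun i =>
      (P / A) ^+ 2 * a i ^+ 2 - 2 * (P / A) * (a i * b i) + b i ^+ 2)); last first.
    by move=> i _; ring.
  rewrite !big_split /= -!mulr_sumr -/A -/B -/P sumrN -mulr_sumr -/P.
  by field; rewrite A_neq0.
by rewrite subr_ge0 ler_pdivrMr // mulrC.
Qed.

Lemma sqrt_sum_sqr_le (R : rcfType) (I : finType) (a : I -> R) :
  (forall i, 0 <= a i) -> Num.sqrt (\sum_i a i ^+ 2) <= \sum_i a i.
Proof.
move=> a_ge0.
suff [s_ge0 le_s] : 0 <= \sum_i a i /\ \sum_i a i ^+ 2 <= (\sum_i a i) ^+ 2.
  by rewrite -(ger0_norm s_ge0) -sqrtr_sqr ler_wsqrtr.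
elim/big_rec2: _ => [|i u v _ [v_ge0 uv]]; first by rewrite expr0n.
by have := a_ge0 i; split; nra.
Qed.

Lemma big_neq_ord0 (T : Type) (idx : T) (op : Monoid.law idx) n (F : 'I_n.+1 -> T) :
  \big[op/idx]_(i < n.+1 | i != ord0) F i = \big[op/idx]_(j < n) F (lift ord0 j).
Proof. by rewrite big_mkcond big_ord_recl /= Monoid.mul1m. Qed.

Section Norms.
Variable R : realType.
Local Notation C := R[i].

Lemma cmodE (z : C) : (cmod z)%:C%C = `|z|.
Proof. by rewrite normc_def. Qed.

Lemma cmod_ge0 (z : C) : 0 <= cmod z.
Proof. exact: sqrtr_ge0. Qed.

Lemma cmodM (a b : C) : cmod (a * b) = cmod a * cmod b.
Proof. by apply: complexI; rewrite rmorphM /= !cmodE normrM. Qed.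

Lemma cmodD (a b : C) : cmod (a + b) <= cmod a + cmod b.
Proof. by rewrite -lecR rmorphD /= !cmodE ler_normD. Qed.

Lemma cmodJ (z : C) : cmod (conjc z) = cmod z.
Proof. by apply: complexI; rewrite !cmodE normcJ. Qed.

Lemma cmod_eq0 (z : C) : (cmod z == 0) = (z == 0).
Proof. by rewrite -(inj_eq (@complexI _)) cmodE normr_eq0. Qed.

Lemma cmod_sqr (z : C) : ((cmod z) ^+ 2)%:C%C = z * conjc z.
Proof. by rewrite rmorphXn /= cmodE sqr_normc. Qed.

Lemma cmod_real (x : R) : cmod x%:C%C = `|x|.
Proof. by rewrite /cmod /= expr0n /= addr0 sqrtr_sqr. Qed.

Lemma cmod0 : cmod (0 : C) = 0.
Proof. by rewrite cmod_real normr0. Qed.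

Lemma cmod_sum (I : Type) (s : seq I) (P : pred I) (F : I -> C) :
  cmod (\sum_(i <- s | P i) F i) <= \sum_(i <- s | P i) cmod (F i).
Proof.
elim/big_ind2: _ => [|u1 r1 u2 r2 h1 h2|//]; first by rewrite cmod0.
exact: le_trans (cmodD _ _) (lerD h1 h2).
Qed.

Lemma adjE m p (M : 'M[C]_(m, p)) i j : adj M i j = conjc (M j i).
Proof. by rewrite !mxE. Qed.

Lemma adjM m p q (M : 'M[C]_(m, p)) (N : 'M[C]_(p, q)) :
  adj (M *m N) = adj N *m adj M.
Proof. by rewrite /adj map_mxM trmx_mul. Qed.

Lemma adjK m p (M : 'M[C]_(m, p)) : adj (adj M) = M.
Proof. by apply/matrixP => i j; rewrite !adjE conjcK. Qed.

Lemma adj_row_mx m p1 p2 (M1 : 'M[C]_(m, p1)) (M2 : 'M[C]_(m, p2)) :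
  adj (row_mx M1 M2) = col_mx (adj M1) (adj M2).
Proof. by rewrite /adj map_row_mx tr_row_mx. Qed.

Lemma adj_col_mulmx m p (M : 'M[C]_(m, p)) (v : 'cV[C]_m) i :
  (adj (col i M) *m v) 0 0 = (adj M *m v) i 0.
Proof. by rewrite !mxE; apply: eq_bigr => j _; rewrite !mxE. Qed.

Lemma mulmx_sum_col m p (M : 'M[C]_(m, p)) (v : 'cV[C]_p) :
  M *m v = \sum_j v j 0 *: col j M.
Proof.
apply/matrixP => i k; rewrite !mxE summxE; apply: eq_bigr => j _.
by rewrite !mxE (ord1 k) mulrC.
Qed.

Lemma mulmx_split_ord0 m p (M : 'M[C]_(m, p.+1)) (v : 'cV[C]_p.+1) :
  M *m v = v ord0 0 *: col ord0 M +
           (\matrix_(i < m, j < p) M i (lift ord0 j)) *m \col_(j < p) v (lift ord0 j) 0.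
Proof.
rewrite !mulmx_sum_col big_ord_recl; congr (_ + _).
apply: eq_bigr => j _; congr (_ *: _); first by rewrite mxE.
by apply/matrixP => i k; rewrite !mxE.
Qed.

Lemma vnorm_ge0 m (v : 'cV[C]_m) : 0 <= vnorm v.
Proof. exact: sqrtr_ge0. Qed.

Lemma vnorm_sqr m (v : 'cV[C]_m) : vnorm v ^+ 2 = \sum_i cmod (v i 0) ^+ 2.
Proof. by rewrite sqr_sqrtr // sumr_ge0 // => i _; apply: sqr_ge0. Qed.

Lemma vnorm_sqr_dot m (v : 'cV[C]_m) : (vnorm v ^+ 2)%:C%C = (adj v *m v) 0 0.
Proof.
rewrite vnorm_sqr rmorph_sum !mxE; apply: eq_bigr => i _ /=.
by rewrite cmod_sqr adjE mulrC.
Qed.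

Lemma vnorm_unitary m p (U : 'M[C]_(m, p)) (v : 'cV[C]_p) :
  adj U *m U = 1%:M -> vnorm (U *m v) = vnorm v.
Proof.
move=> hU; apply/eqP; rewrite -(eqrXn2 (ltn0Sn 1)) ?vnorm_ge0 //.
rewrite -(inj_eq (@complexI _)) !vnorm_sqr_dot.
by rewrite adjM -mulmxA (mulmxA (adj U)) hU mul1mx.
Qed.

Lemma vnorm_col_mx_sqr m1 m2 (u : 'cV[C]_m1) (v : 'cV[C]_m2) :
  vnorm (col_mx u v) ^+ 2 = vnorm u ^+ 2 + vnorm v ^+ 2.
Proof.
rewrite !vnorm_sqr big_split_ord /=.
by congr (_ + _); apply: eq_bigr => i _; rewrite ?col_mxEu ?col_mxEd.
Qed.

Lemma vnorm_sqr_split_ord0 p (v : 'cV[C]_p.+1) :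
  vnorm v ^+ 2 = cmod (v ord0 0) ^+ 2 + vnorm (\col_(j < p) v (lift ord0 j) 0) ^+ 2.
Proof.
by rewrite !vnorm_sqr big_ord_recl; congr (_ + _); apply: eq_bigr => j _; rewrite mxE.
Qed.

Lemma vnorm0 m : vnorm (0 : 'cV[C]_m) = 0.
Proof. by rewrite /vnorm big1 ?sqrtr0 // => i _; rewrite mxE cmod0 expr0n. Qed.

Lemma vnormZ m (a : C) (v : 'cV[C]_m) : vnorm (a *: v) = cmod a * vnorm v.
Proof.
rewrite /vnorm (eq_bigr (fun i => cmod a ^+ 2 * cmod (v i 0) ^+ 2)); last first.
  by move=> i _; rewrite mxE cmodM exprMn.
by rewrite -mulr_sumr sqrtrM ?sqr_ge0 // sqrtr_sqr ger0_norm // cmod_ge0.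
Qed.

Lemma cmod_le_vnorm m (v : 'cV[C]_m) j : cmod (v j 0) <= vnorm v.
Proof.
apply: ler_of_sqr; first exact: vnorm_ge0.
by rewrite vnorm_sqr (bigD1 j) //= lerDl sumr_ge0 // => i _; apply: sqr_ge0.
Qed.

Lemma sum_mul_cmod_le m (u v : 'cV[C]_m) :
  \sum_i cmod (u i 0) * cmod (v i 0) <= vnorm u * vnorm v.
Proof.
rewrite -sqrtrM ?sumr_ge0 // => [|i _]; last exact: sqr_ge0.
apply: le_trans (ler_norm _) _; rewrite -sqrtr_sqr ler_wsqrtr //.
exact: sum_mul_sqr_le.
Qed.

Lemma cmod_dot_le m (u v : 'cV[C]_m) : cmod ((adj u *m v) 0 0) <= vnorm u * vnorm v.
Proof.
rewrite mxE; apply: le_trans (cmod_sum _ _ _) _.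
under eq_bigr do rewrite adjE cmodM cmodJ.
exact: sum_mul_cmod_le.
Qed.

Lemma vnormD m (u v : 'cV[C]_m) : vnorm (u + v) <= vnorm u + vnorm v.
Proof.
apply: ler_of_sqr; first by rewrite addr_ge0 ?vnorm_ge0.
have uv := sum_mul_cmod_le u v.
rewrite sqrrD !vnorm_sqr.
apply: le_trans (_ : \sum_i (cmod (u i 0) + cmod (v i 0)) ^+ 2 <= _).
  apply: ler_sum => i _; rewrite mxE.
  by have := cmodD (u i 0) (v i 0); have := cmod_ge0 (u i 0 + v i 0); nra.
under eq_bigr do rewrite sqrrD.
by rewrite !big_split /= -!vnorm_sqr mulr2n; lra.
Qed.

Lemma vnorm_sum m (I : Type) (s : seq I) (P : pred I) (F : I -> 'cV[C]_m) :
  vnorm (\sum_(i <- s | P i) F i) <= \sum_(i <- s | P i) vnorm (F i).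
Proof.
elim/big_ind2: _ => [|u1 r1 u2 r2 h1 h2|//]; first by rewrite vnorm0.
exact: le_trans (vnormD _ _) (lerD h1 h2).
Qed.

Lemma vnorm_mulmx_le_sum m p (M : 'M[C]_(m, p)) (v : 'cV[C]_p) :
  vnorm (M *m v) <= \sum_j cmod (v j 0) * vnorm (col j M).
Proof.
rewrite mulmx_sum_col; apply: le_trans (vnorm_sum _ _ _) _.
by apply: ler_sum => j _; rewrite vnormZ.
Qed.

End Norms.

Section SpectralQuantities.
Variable R : realType.
Local Notation C := R[i].

Lemma vnorm_mulmx_le m p (M : 'M[C]_(m, p)) (v : 'cV[C]_p) :
  vnorm (M *m v) <= specnorm M * vnorm v.
Proof.
have M_ub : has_ubound [set vnorm (M *m w) | w in [set w | vnorm w = 1]].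
  exists (\sum_j vnorm (col j M)) => _ [w /= w1 <-].
  apply: le_trans (vnorm_mulmx_le_sum _ _) _; apply: ler_sum => j _.
  by rewrite ler_piMl ?vnorm_ge0 // -w1 cmod_le_vnorm.
have [v0|v_neq0] := eqVneq (vnorm v) 0.
  have -> : v = 0.
    apply/matrixP => i j; rewrite (ord1 j) mxE; apply/eqP; rewrite -cmod_eq0 eq_le.
    by rewrite cmod_ge0 andbT -v0 cmod_le_vnorm.
  by rewrite mulmx0 vnorm0 vnorm0 mulr0.
have v_gt0 : 0 < vnorm v by rewrite lt_neqAle eq_sym v_neq0 vnorm_ge0.
pose a : C := ((vnorm v)^-1)%:C%C.
have ca : cmod a = (vnorm v)^-1 by rewrite cmod_real ger0_norm // invr_ge0 ltW.
have : vnorm (M *m (a *: v)) <= specnorm M.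
  by apply: ub_le_sup => //; exists (a *: v) => //=; rewrite vnormZ ca mulVf.
by rewrite -scalemxAr vnormZ ca ler_pdivrMl // mulrC.
Qed.

Lemma specnorm_ge0 m p (M : 'M[C]_(m, p)) : 0 <= specnorm M.
Proof.
case: p M => [|p] M.
  rewrite /specnorm; set S := (X in sup X); suff -> : S = set0 by rewrite sup0.
  apply/seteqP; split=> // _ [v /= + _].
  by rewrite /vnorm big_ord0 sqrtr0 => /eqP; rewrite eq_sym oner_eq0.
have := vnorm_mulmx_le M (delta_mx 0 0).
have -> : vnorm (delta_mx 0 0 : 'cV[C]_p.+1) = 1.
  rewrite /vnorm (bigD1 0) //= big1 => [|i i_neq0].
    by rewrite mxE !eqxx cmod_real normr1 expr1n addr0 sqrtr1.
  by rewrite mxE (negPf i_neq0) cmod0 expr0n.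
by rewrite mulr1; apply: le_trans; apply: vnorm_ge0.
Qed.

Lemma vnorm_adj_mulmx_le m p (M : 'M[C]_(m, p)) (z : 'cV[C]_m) :
  vnorm (adj M *m z) <= specnorm M * vnorm z.
Proof.
set w := adj M *m z.
have w_sqr : vnorm w ^+ 2 <= vnorm z * (specnorm M * vnorm w).
  have -> : vnorm w ^+ 2 = cmod ((adj z *m (M *m w)) 0 0).
    rewrite mulmxA -[M]adjK -adjM -/w -vnorm_sqr_dot.
    by rewrite cmod_real ger0_norm // sqr_ge0.
  by apply: le_trans (cmod_dot_le _ _) _; rewrite ler_wpM2l ?vnorm_ge0 ?vnorm_mulmx_le.
have [w_gt0|w_le0] := ltrP 0 (vnorm w).
  by rewrite -(ler_pM2r w_gt0) mulrC -expr2 (le_trans w_sqr) // mulrCA mulrA.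
by apply: le_trans w_le0 _; rewrite mulr_ge0 ?specnorm_ge0 ?vnorm_ge0.
Qed.

Lemma eigenvalue_diag_mx n (d : 'rV[C]_n) j : eigenvalue (diag_mx d) (d 0 j).
Proof.
apply/eigenvalueP; exists (delta_mx 0 j); first by rewrite -rowE row_diag_mx.
by apply/negP => /eqP/matrixP/(_ 0 j)/eqP; rewrite !mxE !eqxx oner_eq0.
Qed.

Lemma specdist_ge0 n (M : 'M[C]_n) lam : (0 <= specdist M lam)%E.
Proof. by apply: le_ereal_inf_tmp => _ [mu _ <-]; rewrite lee_fin cmod_ge0. Qed.

Lemma specdist_le n (M : 'M[C]_n) lam mu :
  eigenvalue M mu -> (specdist M lam <= (cmod (lam - mu))%:E)%E.
Proof. by move=> M_mu; apply: ereal_inf_lbound; exists mu. Qed.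

Lemma fine_specdist_le n (M : 'M[C]_n) lam mu :
  eigenvalue M mu -> fine (specdist M lam) <= cmod (lam - mu).
Proof.
move=> M_mu; have le_mu := specdist_le lam M_mu.
have /fineK <- : specdist M lam \is a fin_num.
  by rewrite ge0_fin_numE ?specdist_ge0 // (le_lt_trans le_mu) ?ltry.
by rewrite -lee_fin fineK ?ge0_fin_numE ?specdist_ge0 // (le_lt_trans le_mu) ?ltry.
Qed.

Lemma edivrE (a d : R) : d != 0 -> edivr a d = (a / d)%:E.
Proof. by rewrite /edivr => /negPf ->. Qed.

Lemma edivr_lt_neq0 (a d : R) (u : \bar R) : (edivr a d < u)%E -> d != 0.
Proof. by apply: contraTneq => ->; rewrite /edivr eqxx ltNge leey. Qed.

Lemma sum_edivr_lt_neq0 (I : finType) (P : pred I) (a d : I -> R) (u : \bar R) :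
  (\sum_(i | P i) edivr (a i) (d i) < u)%E -> forall i, P i -> d i != 0.
Proof.
move=> lt_u i Pi; apply: contraTneq lt_u => di0.
suff -> : (\sum_(i | P i) edivr (a i) (d i) = +oo)%E by rewrite ltNge leey.
apply/esum_eqyP => [j _|]; first by rewrite /edivr; case: ifP.
by exists i; rewrite mem_index_enum /edivr di0 eqxx.
Qed.

Lemma sum_edivrE (I : finType) (P : pred I) (a d : I -> R) :
  (forall i, P i -> d i != 0) ->
  (\sum_(i | P i) edivr (a i) (d i) = (\sum_(i | P i) a i / d i)%:E)%E.
Proof. by move=> d_neq0; rewrite -sumEFin; apply: eq_bigr => i /d_neq0 /edivrE. Qed.

Lemma adj_trmxC m p (M : 'M[C]_(m, p)) : adj M = map_mx Num.conj M^T.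
Proof. by rewrite /adj map_trmx. Qed.

Lemma specdist_mul_vnorm_le n (M : 'M[C]_n) lam (z : 'cV[C]_n) g :
  adj M = M -> (g%:E <= specdist M lam)%E -> g * vnorm z <= vnorm (lam *: z - M *m z).
Proof.
move=> M_herm g_le.
have /orthomx_spectralP M_diag : M \is normalmx.
  by apply/normalmxP; rewrite -adj_trmxC M_herm.
set P := spectralmx M in M_diag; set d := spectral_diag M in M_diag.
have P_unitary : P \is unitarymx := spectral_unitarymx M.
have PadjP : P *m adj P = 1%:M by rewrite adj_trmxC; apply/unitarymxP.
have adjPP : adj P *m P = 1%:M := mulmx1C PadjP.
rewrite invmx_unitary // -adj_trmxC in M_diag.
have g_le_d j : g <= cmod (lam - d 0 j).
  rewrite -lee_fin (le_trans g_le) // specdist_le //; apply/eigenvalueP.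
  exists (row j P).
    rewrite {1}M_diag !mulmxA rowE -(mulmxA _ P) PadjP mulmx1.
    by rewrite -(rowE j (diag_mx d)) row_diag_mx -scalemxAl.
  apply/eqP => Pj0.
  have := congr1 (row j) PadjP; rewrite row_mul Pj0 mul0mx row1 => /matrixP/(_ 0 j).
  by rewrite !mxE !eqxx => /eqP; rewrite eq_sym oner_eq0.
set w := P *m z.
have -> : lam *: z - M *m z = adj P *m (lam *: w - diag_mx d *m w).
  by rewrite mulmxBr -scalemxAr /w !mulmxA adjPP mul1mx {1}M_diag.
rewrite vnorm_unitary ?adjK // -(vnorm_unitary z adjPP) -/w.
have [g_le0|g_gt0] := lerP g 0.
  by apply: le_trans (vnorm_ge0 _); rewrite mulr_le0_ge0 ?vnorm_ge0.
apply: ler_of_sqr; first exact: vnorm_ge0.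
rewrite exprMn !vnorm_sqr mulr_sumr; apply: ler_sum => j _.
rewrite mul_diag_mx !mxE -mulrBl cmodM exprMn ler_wpM2r ?sqr_ge0 //.
by rewrite lerXn2r ?nnegrE ?(ltW g_gt0) ?cmod_ge0.
Qed.

End SpectralQuantities.

Lemma sqrt_sqrD_le_div_gap (R : realType) (r0 Z S T c : R) (Gap : \bar R) :
  0 <= r0 -> 0 <= Z -> 0 <= S -> S <= Z * T ->
  (forall g, (g%:E <= Gap)%E -> g * Z <= r0 + c * Z) -> (c%:E < Gap)%E ->
  ((Num.sqrt (S ^+ 2 + Z ^+ 2))%:E <=
     r0%:E / (Gap - c%:E) * (Num.sqrt (1 + T ^+ 2))%:E)%E.
Proof.
move=> r0_ge0 Z_ge0 S_ge0 S_le gap_le.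
case: Gap gap_le => [G| |//] gap_le c_lt.
  rewrite lte_fin in c_lt; have Gc_gt0 : 0 < G - c by rewrite subr_gt0.
  rewrite -EFinB inver gt_eqF // -!EFinM lee_fin.
  have Z_le : Z <= r0 / (G - c).
    by rewrite ler_pdivlMr //; have := gap_le G (lexx _); lra.
  apply: le_trans (_ : Num.sqrt (Z ^+ 2 * (1 + T ^+ 2)) <= _).
    by rewrite ler_wsqrtr //; nra.
  by rewrite sqrtrM ?sqr_ge0 // sqrtr_sqr ger0_norm // ler_wpM2r ?sqrtr_ge0.
(* an infinite Gap forces Z = 0, hence S = 0 *)
have Z0 : Z = 0.
  apply/eqP; rewrite eq_le Z_ge0 andbT leNgt; apply/negP => Z_gt0.
  by have := gap_le ((r0 + c * Z + 1) / Z) (leey _); rewrite divfK ?gt_eqF //; lra.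
have S0 : S = 0 by apply/eqP; rewrite eq_le S_ge0 andbT -(mul0r T) -Z0.
by rewrite Z0 S0 expr0n addr0 sqrtr0 addye // invey mule0 mul0e.
Qed.

Section EigenvectorCoordinates.
Variables (R : realType) (n k p : nat).
Local Notation C := R[i].
Variables (A : 'M[C]_n) (Q : 'M[C]_(n, k.+1)) (Qp : 'M[C]_(n, p)).
Variables (Om : 'M[C]_k.+1) (lamh : 'rV[C]_k.+1) (lam : C) (x : 'cV[C]_n).
Hypothesis A_herm : adj A = A.
Hypothesis Om_unitary : adj Om *m Om = 1%:M /\ Om *m adj Om = 1%:M.
Hypothesis QAQ_eig : adj Q *m A *m Q = Om *m diag_mx lamh *m adj Om.
Hypothesis QQp_unitary : adj (row_mx Q Qp) *m row_mx Q Qp = 1%:M /\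
                         row_mx Q Qp *m adj (row_mx Q Qp) = 1%:M.
Hypothesis x_eig : A *m x = lam *: x.
Hypothesis x_unit : vnorm x = 1.
Variables (y : 'cV[C]_k.+1) (z : 'cV[C]_p).
Hypothesis yE : y = adj Om *m adj Q *m x.
Hypothesis zE : z = adj Qp *m x.

Local Notation Rm := (adj Qp *m A *m Q *m Om).
Local Notation A3 := (adj Qp *m A *m Qp).
Local Notation R2 := (\matrix_(i < p, j < k) Rm i (lift ord0 j)).
Local Notation y2 := (\col_(j < k) y (lift ord0 j) 0).

Lemma eigvec_coordE : x = Q *m Om *m y + Qp *m z.
Proof.
have [_ WadjW] := QQp_unitary; have [_ OmadjOm] := Om_unitary.
rewrite yE zE !mulmxA -(mulmxA Q) OmadjOm mulmx1 -!mulmxA -mul_row_col.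
by rewrite -mul_col_mx -adj_row_mx mulmxA WadjW mul1mx.
Qed.

Lemma coord_sqr_sum1 : cmod (y ord0 0) ^+ 2 + vnorm y2 ^+ 2 + vnorm z ^+ 2 = 1.
Proof.
have [_ WadjW] := QQp_unitary; have [_ OmadjOm] := Om_unitary.
rewrite -vnorm_sqr_split_ord0 yE -mulmxA vnorm_unitary ?adjK //.
rewrite zE -vnorm_col_mx_sqr.
by rewrite -mul_col_mx -adj_row_mx vnorm_unitary ?adjK // x_unit expr1n.
Qed.

Lemma sin_vangle_coord :
  sin (vangle x (col ord0 (Q *m Om))) = Num.sqrt (vnorm y2 ^+ 2 + vnorm z ^+ 2).
Proof.
have := coord_sqr_sum1; have := cmod_ge0 (y ord0 0).
have := sqr_ge0 (vnorm y2); have := sqr_ge0 (vnorm z) => ? ? ? norm1.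
rewrite /vangle adj_col_mulmx adjM -yE sin_acos; first by congr Num.sqrt; lra.
by apply/andP; split; nra.
Qed.

Lemma mulmx_eigvec_coord q (M : 'M[C]_(q, n)) :
  lam *: (M *m x) = M *m A *m Q *m Om *m y + M *m A *m Qp *m z.
Proof. by rewrite scalemxAr -x_eig mulmxA {1}eigvec_coordE mulmxDr !mulmxA. Qed.

Lemma residual_coord : lam *: z - A3 *m z = Rm *m y.
Proof. by rewrite [in lam *: z]zE mulmx_eigvec_coord addrK. Qed.

Lemma ritz_coord i : (lam - lamh 0 i) * y i 0 = (adj (col i Rm) *m z) 0 0.
Proof.
have [adjOmOm _] := Om_unitary.
have := mulmx_eigvec_coord (adj Om *m adj Q); rewrite -yE.
have -> : adj Om *m adj Q *m A *m Q *m Om = diag_mx lamh.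
  transitivity (adj Om *m (adj Q *m A *m Q) *m Om); first by rewrite !mulmxA.
  by rewrite QAQ_eig !mulmxA adjOmOm mul1mx -mulmxA adjOmOm mulmx1.
have -> : adj Om *m adj Q *m A *m Qp = adj Rm by rewrite !adjM adjK A_herm !mulmxA.
move=> /(congr1 (fun v : 'cV_k.+1 => v i 0)).
rewrite adj_col_mulmx mul_diag_mx !mxE => lam_y.
by rewrite mulrBl lam_y addrAC subrr add0r.
Qed.

Lemma Gap_coord_le g : (g%:E <= specdist A3 lam)%E ->
  g * vnorm z <= vnorm (col ord0 Rm) + vnorm (R2 *m y2).
Proof.
move=> g_le; have A3_herm : adj A3 = A3 by rewrite !adjM adjK A_herm mulmxA.
apply: le_trans (specdist_mul_vnorm_le z A3_herm g_le) _.
rewrite residual_coord mulmx_split_ord0; apply: le_trans (vnormD _ _) _.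
rewrite lerD2r vnormZ ler_piMl ?vnorm_ge0 //.
have := coord_sqr_sum1; have := sqr_ge0 (vnorm y2); have := sqr_ge0 (vnorm z).
by have := cmod_ge0 (y ord0 0); nra.
Qed.

Lemma col_R2 j : col j R2 = col (lift ord0 j) Rm.
Proof. by apply/matrixP => a b; rewrite !mxE. Qed.

Lemma sin_vangle_le_specnorm (gap : R) :
  0 < gap -> (forall j, gap <= cmod (lam - lamh 0 (lift ord0 j))) ->
  ((specnorm R2 ^+ 2 / gap)%:E < specdist A3 lam)%E ->
  ((sin (vangle x (col ord0 (Q *m Om))))%:E <=
     (vnorm (col ord0 Rm))%:E / (specdist A3 lam - (specnorm R2 ^+ 2 / gap)%:E) *
     (Num.sqrt (1 + specnorm R2 ^+ 2 / gap ^+ 2))%:E)%E.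
Proof.
move=> gap_gt0 gap_le c_lt; have N_ge0 := specnorm_ge0 R2.
have gap_y2 : gap * vnorm y2 <= specnorm R2 * vnorm z.
  apply: le_trans (vnorm_adj_mulmx_le R2 z); apply: ler_of_sqr; first exact: vnorm_ge0.
  rewrite exprMn !vnorm_sqr mulr_sumr; apply: ler_sum => j _.
  rewrite -adj_col_mulmx col_R2 -ritz_coord cmodM mxE exprMn ler_wpM2r ?sqr_ge0 //.
  by rewrite lerXn2r ?nnegrE ?cmod_ge0 ?(ltW gap_gt0) ?gap_le.
have y2_le : vnorm y2 <= vnorm z * (specnorm R2 / gap).
  by rewrite mulrA ler_pdivlMr // mulrC (mulrC (vnorm z)).
rewrite sin_vangle_coord -expr_div_n.
apply: sqrt_sqrD_le_div_gap => //; try exact: vnorm_ge0.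
move=> g /Gap_coord_le g_le; apply: le_trans g_le _; rewrite lerD2l.
apply: le_trans (vnorm_mulmx_le _ _) _.
rewrite expr2 -!mulrA ler_wpM2l //; apply: le_trans y2_le _.
by rewrite [X in X <= _]mulrC mulrA.
Qed.

Local Notation d j := (cmod (lam - lamh 0 (lift ord0 j))).
Local Notation r j := (col (lift ord0 j) Rm).

Lemma sin_vangle_le_sum :
  (forall j, 0 < d j) ->
  ((\sum_j vnorm (r j) ^+ 2 / d j)%:E < specdist A3 lam)%E ->
  ((sin (vangle x (col ord0 (Q *m Om))))%:E <=
     (vnorm (col ord0 Rm))%:E / (specdist A3 lam - (\sum_j vnorm (r j) ^+ 2 / d j)%:E) *
     (Num.sqrt (1 + (\sum_j vnorm (r j) / d j) ^+ 2))%:E)%E.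
Proof.
move=> d_gt0 c_lt.
have y2_le j : cmod (y2 j 0) <= vnorm z * (vnorm (r j) / d j).
  rewrite mxE mulrA ler_pdivlMr // mulrC -cmodM ritz_coord mulrC.
  exact: cmod_dot_le.
rewrite sin_vangle_coord.
apply: sqrt_sqrD_le_div_gap => //; try exact: vnorm_ge0.
  apply: le_trans (sqrt_sum_sqr_le (fun j => cmod_ge0 (y2 j 0))) _.
  by rewrite mulr_sumr ler_sum.
move=> g /Gap_coord_le g_le; apply: le_trans g_le _; rewrite lerD2l.
apply: le_trans (vnorm_mulmx_le_sum _ _) _; rewrite mulr_suml ler_sum // => j _.
rewrite col_R2; apply: le_trans (ler_wpM2r (vnorm_ge0 _) (y2_le j)) _.
by rewrite [leRHS]mulrC expr2 !mulrA mulrAC.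
Qed.

End EigenvectorCoordinates.

Unset Implicit Arguments. Set Strict Implicit.

Theorem theorem4p1 (R : realType) (n m : nat) (hkn : (m.+2 <= n)%N)
    (A : 'M[R[i]]_n) (hA : adj A = A)
    (Q : 'M[R[i]]_(n, m.+2)) (hQ : adj Q *m Q = 1%:M)
    (Om : 'M[R[i]]_(m.+2)) (hOm : adj Om *m Om = 1%:M /\ Om *m adj Om = 1%:M)
    (lamh : 'rV[R[i]]_(m.+2))
    (hdec : adj Q *m A *m Q = Om *m diag_mx lamh *m adj Om)
    (Qp : 'M[R[i]]_(n, n - m.+2))
    (hQp : adj (row_mx Q Qp) *m row_mx Q Qp = 1%:M /\
           row_mx Q Qp *m adj (row_mx Q Qp) = 1%:M)
    (lam : R[i]) (x : 'cV[R[i]]_n)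
    (hx : A *m x = lam *: x) (hxn : vnorm x = 1) :
  let Xh := Q *m Om in
  let xh := col ord0 Xh in
  let Rm := adj Qp *m A *m Q *m Om in
  let r := fun i : 'I_m.+2 => col i Rm in
  let A3 := adj Qp *m A *m Qp in
  let R2 := \matrix_(i < n - m.+2, j < m.+1) Rm i (lift ord0 j) in
  let Lamh2 := diag_mx (\row_(j < m.+1) lamh 0 (lift ord0 j)) in
  let Gap : \bar R := specdist A3 lam in
  let gap : R := fine (specdist Lamh2 lam) in
  let c1 : \bar R := edivr (specnorm R2 ^+ 2) gap in
  let c2 : \bar R :=
    (\sum_(i < m.+2 | i != ord0) edivr (vnorm (r i) ^+ 2)%R (cmod (lam - lamh 0 i)%R))%E in
  ((c1 < Gap)%E ->
     ((sin (vangle x xh))%:E <=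
        (vnorm (r ord0))%:E / (Gap - c1) *
        (Num.sqrt (1 + specnorm R2 ^+ 2 / gap ^+ 2))%:E)%E) /\
  ((c2 < Gap)%E ->
     ((sin (vangle x xh))%:E <=
        (vnorm (r ord0))%:E / (Gap - c2) *
        (Num.sqrt (1 + (\sum_(i < m.+2 | i != ord0)
                          vnorm (r i) / cmod (lam - lamh 0 i)) ^+ 2))%:E)%E).
Proof.
move=> Xh xh Rm r A3 R2 Lamh2 Gap gap c1 c2.
split=> [c1_lt | c2_lt].
  have gap_le j : gap <= cmod (lam - lamh 0 (lift ord0 j)).
    have := fine_specdist_le lam (eigenvalue_diag_mx (\row_j0 lamh 0 (lift ord0 j0)) j).
    by rewrite mxE.
  have gap_gt0 : 0 < gap.
    by rewrite lt_neqAle eq_sym (edivr_lt_neq0 c1_lt) fine_ge0 ?specdist_ge0.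
  rewrite /c1 edivrE ?gt_eqF // in c1_lt *.
  exact: (sin_vangle_le_specnorm hA hOm hdec hQp hx hxn (erefl _) (erefl _)
            gap_gt0 gap_le c1_lt).
have d_neq0 := sum_edivr_lt_neq0 c2_lt.
have d_gt0 j : 0 < cmod (lam - lamh 0 (lift ord0 j)).
  by rewrite lt_neqAle eq_sym d_neq0 ?cmod_ge0.
rewrite /c2 sum_edivrE // !big_neq_ord0 in c2_lt *.
exact: (sin_vangle_le_sum hA hOm hdec hQp hx hxn (erefl _) (erefl _) d_gt0 c2_lt).
Qed.
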